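(* Let $q\ge 1$ and $n\ge 0$ be integers, let $a_1,\dots,a_n\in\mathbb{Z}_q$ be reduced residues (i.e. $\gcd(a_i,q)=1$ for all $i$), and let $P\subseteq\mathbb{Z}_q$ with $|P|=k$. Then the number of the $2^n$ choices $(\varepsilon_1,\dots,\varepsilon_n)\in\{0,1\}^n$ for which $\sum_{i=1}^n\varepsilon_i a_i \in P$ is at most $$\sum_{\substack{j\in\mathbb{Z}\\ (n-k)/2\le j<(n+k)/2}}\binom{n}{j}_q .$$ Moreover, this bound is best possible: for all such $q,n,k$ there exist reduced residues $a_1,\dots,a_n$ and a set $P\subseteq\mathbb{Z}_q$ with $|P|=k$ for which equality holds.
   Context: $\mathbb{Z}_q$ denotes the additive group of integers modulo $q$. For an integer $s$, the mod $q$ binomial coefficient is $\binom{n}{s}_q=|\{A\subseteq\{1,\dots,n\}: |A|\equiv s \pmod q\}|=\sum_{j\equiv s \ (\mathrm{mod}\ q),\,0\le j\le n}\binom{n}{j}$. The sum in the claim is the sum of the $k$ ''middle'' mod $q$ binomial coefficients in $n$. *)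

From mathcomp Require Import all_boot all_order all_algebra.
Set Implicit Arguments. Unset Strict Implicit. Unset Printing Implicit Defensive.
Import GRing.Theory Num.Theory.

(* Z_q is represented by 'I_q (residues 0..q-1), q >= 1; addition mod q. *)

Definition binom_mod (q n : nat) (s : int) : nat :=
  \sum_(0 <= j < n.+1 | (q%:Z %| (j%:Z - s)%R)%Z) 'C(n, j).

(* Every such j lies in
   [-k, n+k], so j is written j = t - k with 0 <= t <= n + 2k. *)
Definition middle_binom_sum (q n k : nat) : nat :=
  \sum_(0 <= t < (n + 2 * k).+1
         | ((n%:Z - k%:Z <= 2%:Z * (t%:Z - k%:Z))
            && (2%:Z * (t%:Z - k%:Z) < n%:Z + k%:Z))%R)
     binom_mod q n (t%:Z - k%:Z)%R.

Definition signed_sum (q n : nat) (a : 'I_n -> 'I_q) (e : {ffun 'I_n -> bool}) : nat :=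
  (\sum_(i < n) e i * a i) %% q.

Definition hit_count (q n : nat) (a : 'I_n -> 'I_q) (P : {set 'I_q}) : nat :=
  #|[set e : {ffun 'I_n -> bool} | [exists p in P, signed_sum a e == nat_of_ord p]]|.

(* Write N_a(x) for the number of eps in {0,1}^n with sum_i eps_i a_i = x in Z_q, and F_n(k)
   for the sum of the k middle mod q binomial coefficients.  Splitting on eps_0 gives
   N_a(x) = N_a'(x) + N_a'(x - a_0), so the count for (a, P) is the count of a' on P plus
   the count of a' on Q = P - a_0, which is also the count of a' on P :|: Q plus that on
   P :&: Q.  By induction this is at most F_n(u) + F_n(v) with u + v = 2|P|.  As (n choose j)_q
   depends only on |2j - n| and j mod q, and decreases in |2j - n| up to q, F_n is concave
   on [0, q]; with Pascal's rule F_(n+1)(k) = F_n(k + 1) + F_n(k - 1) this closes the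
   induction, except when v = |P|: then P is invariant under translation by the unit a_0,
   hence empty or all of Z_q, and F_(n+1)(q) = 2 F_n(q).  For a = (1, ..., 1) one has
   N_a(x) = (n choose x)_q, so P made of the residues of the k middle indices attains the
   bound. *)

From mathcomp Require Import all_boot all_order all_algebra zify.
Set Implicit Arguments. Unset Strict Implicit. Unset Printing Implicit Defensive.
Import GRing.Theory Num.Theory.

Lemma dvdz_lt_eq0 (d : nat) (x : int) : (d %| x)%Z -> (`|x| < d)%N -> x = 0%R.
Proof.
rewrite dvdzE /= => dvd_x lt_x; apply/eqP; rewrite -absz_eq0.
by apply: contraTT lt_x => x_neq0; rewrite -leqNgt dvdn_leq // lt0n.
Qed.

Section BinomMod.

Variable q : nat.
Implicit Types (n : nat) (s t : int).

Lemma binom_mod_eqmod n s t : (s = t %[mod q])%Z -> binom_mod q n s = binom_mod q n t.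
Proof.
move/eqP; rewrite eqz_mod_dvd => dvd_st; apply: eq_bigl => j.
have -> : (j%:Z - s = (j%:Z - t) - (s - t))%R by lia.
by rewrite rpredBr.
Qed.

Lemma binom_mod_subq n s : binom_mod q n (s - q%:Z)%R = binom_mod q n s.
Proof. by apply: binom_mod_eqmod; rewrite -(modzDr (s - q%:Z)) subrK. Qed.

Lemma binom_mod_sym n s : binom_mod q n s = binom_mod q n (n%:Z - s)%R.
Proof.
rewrite /binom_mod !(big_mkcond (fun j => _ %| _)%Z) big_nat_rev /=.
apply: eq_big_nat => j /andP[_ lt_jn].
rewrite add0n subSS bin_sub; last by lia.
have -> : ((n - j)%N%:Z - s = - (j%:Z - (n%:Z - s)))%R by lia.
by rewrite rpredN.
Qed.

Lemma binom_modS n s : binom_mod q n.+1 s = binom_mod q n s + binom_mod q n (s - 1)%R.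
Proof.
rewrite /binom_mod !(big_mkcond (fun j => _ %| _)%Z).
rewrite [LHS]big_nat_recl // [in X in _ = X + _]big_nat_recl //= !bin0.
set c := fun m j => if (q%:Z %| (j.+1%:Z - s)%R)%Z then 'C(m, j.+1) else 0.
have -> : \sum_(0 <= j < n) c n j = \sum_(0 <= j < n.+1) c n j.
  by rewrite big_nat_recr //= /c bin_small // if_same addn0.
rewrite -addnA -big_split /=; congr (_ + _); apply: eq_big_nat => j _.
rewrite /c binS (_ : (j.+1%:Z - s = j%:Z - (s - 1))%R); last by lia.
by case: ifP.
Qed.

Lemma binom_mod0 s : binom_mod q 0 s = (q%:Z %| s)%Z.
Proof.
rewrite /binom_mod big_mkcond big_nat1 bin0 /=.
by rewrite (_ : (0%:Z - s = - s)%R) ?rpredN; [case: ifP | lia].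
Qed.

Lemma binom_mod_dist n s t :
  `|2 * s - n%:Z|%R = `|2 * t - n%:Z|%R -> binom_mod q n s = binom_mod q n t.
Proof.
move=> eq_dist; have [-> // | ne_st] := eqVneq s t.
by rewrite (binom_mod_sym n t); congr binom_mod; lia.
Qed.

Hypothesis q_gt0 : (0 < q)%N.

Lemma leq_binom_mod n s t :
    (`|2 * s - n%:Z| <= `|2 * t - n%:Z|)%R -> (`|2 * t - n%:Z| <= q%:Z)%R ->
  binom_mod q n t <= binom_mod q n s.
Proof.
elim: n s t => [|n IHn] s t le_st le_tq.
  rewrite !binom_mod0; case dvd_t: (q%:Z %| t)%Z => //.
  have t0 : t = 0%R by apply: dvdz_lt_eq0 dvd_t _; lia.
  by rewrite (_ : s = 0%R) ?dvdz0 //; lia.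
have right_half u : exists2 u' : int,
    (2 * u' - n.+1%:Z = `|2 * u - n.+1%:Z|)%R & binom_mod q n.+1 u = binom_mod q n.+1 u'.
  have [le_nu | lt_un] := lerP n.+1%:Z (2 * u)%R; first by exists u; lia.
  by exists (n.+1%:Z - u)%R; [lia | rewrite -binom_mod_sym].
have [s' ds ->] := right_half s; have [t' dt ->] := right_half t.
have [-> // | ne_st] := eqVneq s' t'.
rewrite !binom_modS; have [le_tq' | lt_qt] := lerP (2 * t' - n.+1%:Z + 1) q%:Z.
  by apply: leq_add; apply: IHn; lia.
rewrite -(binom_mod_subq n t') addnC.
by apply: leq_add; apply: IHn; lia.
Qed.

End BinomMod.

(* [middle_index n 0], [middle_index n 1], ... enumerate the integers j by nondecreasing
   |2j - n|, the one below n/2 first in case of a tie. *)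
Definition middle_index (n t : nat) : int :=
  if odd (n + t) then ((n + t)./2%:Z - t%:Z)%R else ((n + t)./2%:Z)%R.

Definition middle_binom (q n t : nat) : nat := binom_mod q n (middle_index n t).

Lemma middle_indexP n t :
  (2 * middle_index n t - n%:Z = t%:Z)%R \/ (2 * middle_index n t - n%:Z = - t.+1%:Z)%R.
Proof.
rewrite /middle_index; have := odd_double_half (n + t).
by case: (odd (n + t)) => /= h; [right | left]; lia.
Qed.

Lemma middle_windowS n k (j : int) :
  ((n%:Z - k.+1%:Z <= 2 * j) && (2 * j < n%:Z + k.+1%:Z))%R =
  ((n%:Z - k%:Z <= 2 * j) && (2 * j < n%:Z + k%:Z))%R || (j == middle_index n k).
Proof.
rewrite /middle_index; have := odd_double_half (n + k).
by case: (odd (n + k)) => /= h; lia.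
Qed.

Lemma middle_binom_sum0 q n : middle_binom_sum q n 0 = 0.
Proof. by rewrite /middle_binom_sum big1 // => t /andP[]; lia. Qed.

Lemma middle_binom_sumS q n k :
  middle_binom_sum q n k.+1 = middle_binom_sum q n k + middle_binom q n k.
Proof.
rewrite /middle_binom_sum /middle_binom !(big_mkcond (fun t => (_ <= _)%R && _)).
rewrite (_ : (n + 2 * k.+1 = (n + 2 * k).+2)%N); last by lia.
rewrite big_nat_recl // big_nat_recr //= ifF ?add0n; last by lia.
rewrite ifF ?addn0; last by lia.
set J := middle_index n k; have [t0 J_t0] : exists t0 : nat, J = (t0%:Z - k%:Z)%R.
  by exists `|(J + k%:Z)%R|%N; have := middle_indexP n k; lia.
have lt_t0 : (t0 < (n + 2 * k).+1)%N by have := middle_indexP n k; lia.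
have -> : binom_mod q n J =
    \sum_(0 <= t < (n + 2 * k).+1 | t == t0) binom_mod q n (t%:Z - k%:Z)%R.
  by rewrite big_nat1_eq lt_t0 J_t0.
rewrite [X in _ = _ + X]big_mkcond -big_split /=; apply: eq_big_nat => t _.
rewrite (_ : (t.+1%:Z - k.+1%:Z = t%:Z - k%:Z)%R); last by lia.
rewrite middle_windowS -/J J_t0 (_ : (_ == _)%R = (t == t0)); last by apply/eqP/eqP; lia.
case: eqVneq => [-> | _]; last by rewrite orbF addn0.
by rewrite orbT ifF //; have := middle_indexP n k; lia.
Qed.

Lemma middle_binom_sumE q n k : middle_binom_sum q n k = \sum_(t < k) middle_binom q n t.
Proof.
elim: k => [|k IHk]; first by rewrite middle_binom_sum0 big_ord0.
by rewrite middle_binom_sumS IHk big_ord_recr.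
Qed.

Lemma middle_binom_sumD q n k d :
  middle_binom_sum q n (k + d) = middle_binom_sum q n k + \sum_(t < d) middle_binom q n (k + t).
Proof. by rewrite !middle_binom_sumE big_split_ord. Qed.

Lemma leq_middle_binom_sum q n k l : (k <= l)%N -> middle_binom_sum q n k <= middle_binom_sum q n l.
Proof. by move/subnKC <-; rewrite middle_binom_sumD leq_addr. Qed.

Lemma middle_binomS q n t :
  middle_binom q n.+1 t = middle_binom q n t.+1 + middle_binom q n t.-1.
Proof.
rewrite /middle_binom binom_modS.
have := middle_indexP n t; have := middle_indexP n t.+1; have := middle_indexP n t.-1.
set J := middle_index n.+1 t; case: (middle_indexP n.+1 t) => dJ dJ_pred dJ_succ dJ_t.
  rewrite (@binom_mod_dist q n J (middle_index n t.+1)); last by lia.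
  by rewrite (@binom_mod_dist q n (J - 1) (middle_index n t.-1)); lia.
rewrite (@binom_mod_dist q n J (middle_index n t.-1)); last by lia.
by rewrite addnC (@binom_mod_dist q n (J - 1) (middle_index n t.+1)); lia.
Qed.

Lemma middle_binom_sum_pascal q n k :
  middle_binom_sum q n.+1 k.+1 = middle_binom_sum q n k.+2 + middle_binom_sum q n k.
Proof.
elim: k => [|k IHk].
  by rewrite !middle_binom_sumS !middle_binom_sum0 middle_binomS /=; lia.
rewrite middle_binom_sumS IHk middle_binomS /=.
rewrite (middle_binom_sumS q n k.+2) (middle_binom_sumS q n k); lia.
Qed.

Section MiddleBinomMonotone.

Variable q : nat.
Hypothesis q_gt0 : (0 < q)%N.

Lemma leq_middle_binom n s t : (s <= t)%N -> (t < q)%N -> middle_binom q n t <= middle_binom q n s.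
Proof.
move=> le_st lt_tq; apply: leq_binom_mod => //.
  by have := middle_indexP n s; have := middle_indexP n t; lia.
by have := middle_indexP n t; lia.
Qed.

Lemma middle_binom_last n : middle_binom q n q = middle_binom q n q.-1.
Proof.
rewrite /middle_binom; have := middle_indexP n q.-1.
case: (middle_indexP n q) => dJ dJ'.
  by apply: binom_mod_dist; lia.
rewrite -[X in binom_mod _ _ X = _](addrK (q%:Z)%R) binom_mod_subq.
by apply: binom_mod_dist; lia.
Qed.

Lemma middle_binom_sum_spread n u v d : (v <= u)%N -> (u + d <= q)%N ->
  middle_binom_sum q n (u + d) + middle_binom_sum q n v <=
  middle_binom_sum q n u + middle_binom_sum q n (v + d).
Proof.
move=> le_vu le_udq; rewrite !middle_binom_sumD -addnA leq_add2l addnC leq_add2l.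
by apply: leq_sum => t _; apply: leq_middle_binom; have := ltn_ord t; lia.
Qed.

Lemma middle_binom_sum_pair_le n u v k : (u + v = k + k)%N -> (v < k)%N -> (u <= q)%N ->
  middle_binom_sum q n u + middle_binom_sum q n v <= middle_binom_sum q n.+1 k.
Proof.
case: k => // k sum_uv lt_vk le_uq.
have uE : u = (k.+2 + (k - v))%N by lia.
have kE : k = (v + (k - v))%N by lia.
rewrite middle_binom_sum_pascal uE [X in _ <= _ + middle_binom_sum q n X]kE.
by apply: middle_binom_sum_spread; lia.
Qed.

Lemma middle_binom_sum_full n :
  middle_binom_sum q n.+1 q = middle_binom_sum q n q + middle_binom_sum q n q.
Proof.
have F_q : middle_binom_sum q n q = middle_binom_sum q n q.-1 + middle_binom q n q.-1.
  by rewrite -middle_binom_sumS prednK.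
have := middle_binom_sum_pascal q n q.-1; rewrite prednK // => ->.
by rewrite middle_binom_sumS middle_binom_last; lia.
Qed.

End MiddleBinomMonotone.

Section FfunCons.

Variable T : Type.

Definition ffun_cons n (x : T) (f : {ffun 'I_n -> T}) : {ffun 'I_n.+1 -> T} :=
  [ffun i => if unlift ord0 i is Some j then f j else x].

Definition ffun_behead n (f : {ffun 'I_n.+1 -> T}) : {ffun 'I_n -> T} :=
  [ffun j => f (lift ord0 j)].

Lemma ffun_cons0 n x (f : {ffun 'I_n -> T}) : ffun_cons x f ord0 = x.
Proof. by rewrite ffunE unlift_none. Qed.

Lemma ffun_consS n x (f : {ffun 'I_n -> T}) j : ffun_cons x f (lift ord0 j) = f j.
Proof. by rewrite ffunE liftK. Qed.

Lemma ffun_consK n (f : {ffun 'I_n.+1 -> T}) : ffun_cons (f ord0) (ffun_behead f) = f.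
Proof. by apply/ffunP => i; rewrite ffunE; case: unliftP => [j ->|->]; rewrite ?ffunE. Qed.

End FfunCons.

Lemma big_ffunS (R : Type) (idx : R) (op : Monoid.com_law idx) (T : finType) n
    (F : {ffun 'I_n.+1 -> T} -> R) :
  \big[op/idx]_f F f = \big[op/idx]_(x : T) \big[op/idx]_(f : {ffun 'I_n -> T}) F (ffun_cons x f).
Proof.
rewrite pair_big (reindex (fun p : T * {ffun 'I_n -> T} => ffun_cons p.1 p.2)) //.
exists (fun f : {ffun 'I_n.+1 -> T} => (f ord0, ffun_behead f)) => [[x f] _ | f _]; last exact: ffun_consK.
by rewrite /= ffun_cons0; congr pair; apply/ffunP => j; rewrite ffunE ffun_consS.
Qed.

Lemma sum_nat_eq_mem (T : finType) (P : {pred T}) (y : T) : \sum_(x in P) (y == x) = (y \in P).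
Proof.
have [yP | yNP] := boolP (y \in P).
  by rewrite (bigD1 y) //= eqxx big1 // => x /andP[_ /negbTE]; rewrite eq_sym => ->.
by apply: big1 => x xP; case: eqVneq xP yNP => // -> ->.
Qed.

Definition signed_sum_count q n (a : 'I_n -> 'I_q) (x : 'I_q) : nat :=
  \sum_(e : {ffun 'I_n -> bool}) (signed_sum a e == x).

Lemma sum_setUI (T : finType) (A B : {set T}) (F : T -> nat) :
  \sum_(x in A) F x + \sum_(x in B) F x = \sum_(x in A :|: B) F x + \sum_(x in A :&: B) F x.
Proof.
rewrite !(big_mkcond (fun x => x \in _)) -!big_split; apply: eq_bigr => x _ /=.
by rewrite in_setU in_setI; case: (x \in A); case: (x \in B); rewrite /= ?addn0.
Qed.

Lemma signed_sum_cons q n (a : 'I_n.+1 -> 'I_q) b e :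
  signed_sum a (ffun_cons b e) = (b * a ord0 + signed_sum (a \o lift ord0) e) %% q.
Proof.
rewrite /signed_sum big_ord_recl ffun_cons0 modnDmr; congr ((_ + _) %% q).
by apply: eq_bigr => i _; rewrite ffun_consS.
Qed.

Section Counting.

Variable p : nat.
Local Notation q := p.+1.

Lemma hit_countE n (a : 'I_n -> 'I_q) P :
  hit_count a P = \sum_(x in P) signed_sum_count a x.
Proof.
rewrite /hit_count /signed_sum_count exchange_big /= -sum1_card big_mkcond /=.
apply: eq_bigr => e _; rewrite inE; set y : 'I_q := inZp (\sum_(i < n) e i * a i).
have -> : signed_sum a e = y by [].
have -> : [exists x in P, y == x :> nat] = (y \in P).
  apply/existsP/idP => [[x /andP[xP /eqP /val_inj ->]] // | yP].
  by exists y; rewrite yP /=.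
under eq_bigr do rewrite val_eqE.
by rewrite sum_nat_eq_mem; case: (y \in P).
Qed.

Lemma signed_sum_count0 (a : 'I_0 -> 'I_q) x : signed_sum_count a x = (x == 0%R).
Proof.
rewrite /signed_sum_count (eq_bigr (fun _ => nat_of_bool (x == 0%R))).
  by rewrite sum_nat_const card_ffun !card_ord expn0 mul1n.
by move=> e _; rewrite /signed_sum big_ord0 mod0n eq_sym.
Qed.

Lemma signed_sum_countS n (a : 'I_n.+1 -> 'I_q) x :
  signed_sum_count a x =
  signed_sum_count (a \o lift ord0) x + signed_sum_count (a \o lift ord0) (x - a ord0)%R.
Proof.
rewrite /signed_sum_count big_ffunS big_bool [RHS]addnC; congr (_ + _); last first.
  by apply: eq_bigr => e _; rewrite signed_sum_cons mul0n add0n /signed_sum modn_mod.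
apply: eq_bigr => e _; rewrite signed_sum_cons mul1n.
set y : 'I_q := inZp (\sum_(i < n) e i * (a \o lift ord0) i).
have -> : ((a ord0 + signed_sum (a \o lift ord0) e) %% q)%N = val (a ord0 + y)%R by [].
by rewrite -[signed_sum _ _]/(val y) !val_eqE [in RHS]eq_sym subr_eq addrC eq_sym.
Qed.

Lemma shift_invariant_setT (P : {set 'I_q}) (c : 'I_q) :
  coprime c q -> [set x - c | x in P]%R = P -> P != set0 -> P = setT.
Proof.
move=> co_cq PcP /set0Pn[y yP].
have subcP x : x \in P -> (x - c)%R \in P by rewrite -{2}PcP; apply: imset_f.
have submulcP m x : x \in P -> (x - c *+ m)%R \in P.
  by elim: m => [|m IHm] xP; rewrite ?mulr0n ?subr0 // mulrSr opprD addrA subcP ?IHm.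
apply/setP => z; rewrite in_setT.
(* [c] is a unit of Z_q, so [z] is [y - c *+ m] for a suitable [m]. *)
have co_qc : coprime q c by rewrite coprime_sym.
have cu1 : (c * Zp_inv c = 1 %[mod q])%N := congr1 val (Zp_mulzV co_qc).
suff -> : z = (y - c *+ (Zp_inv c * (y - z)%R))%R by apply: submulcP.
apply/esym/(canLR (subKr y))/val_inj.
by rewrite Zp_mulrn /= mulnA -modnMml cu1 modnMml mul1n modn_mod.
Qed.

Lemma middle_binom_sum_setUI_shift_le n (P : {set 'I_q}) (c : 'I_q) : coprime c q ->
  middle_binom_sum q n #|P :|: [set x - c | x in P]%R| +
  middle_binom_sum q n #|P :&: [set x - c | x in P]%R| <= middle_binom_sum q n.+1 #|P|.
Proof.
move=> co_cq; set Q := [set x - c | x in P]%R.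
have card_Q : #|Q| = #|P| by rewrite card_imset //; apply: addIr.
have [lt_PQ_P | ge_PQ_P] := ltnP #|P :&: Q| #|P|.
  apply: middle_binom_sum_pair_le; rewrite ?cardsUI ?card_Q //.
  by have := max_card (mem (P :|: Q)); rewrite card_ord.
have PIQ : P :&: Q = P by apply/eqP; rewrite eqEcard subsetIl.
have QP : Q = P by apply/esym/eqP; rewrite eqEcard card_Q leqnn -PIQ subsetIr.
rewrite QP setUid setIid; have [-> | P_neq0] := eqVneq P set0.
  by rewrite cards0 middle_binom_sum0.
by rewrite (shift_invariant_setT co_cq QP P_neq0) cardsT card_ord middle_binom_sum_full.
Qed.

Lemma sum_signed_sum_count_le n (a : 'I_n -> 'I_q) (P : {set 'I_q}) :
    (forall i, coprime (a i) q) ->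
  \sum_(x in P) signed_sum_count a x <= middle_binom_sum q n #|P|.
Proof.
elim: n a P => [|n IHn] a P co_a.
  have [-> | [x xP]] := set_0Vmem P; first by rewrite big_set0.
  under eq_bigr do rewrite signed_sum_count0 eq_sym.
  rewrite sum_nat_eq_mem (leq_trans (leq_b1 _)) //.
  have P_gt0 : (0 < #|P|)%N by apply/card_gt0P; exists x.
  apply: leq_trans _ (leq_middle_binom_sum q 0 P_gt0).
  by rewrite middle_binom_sumS middle_binom_sum0 /middle_binom binom_mod0 dvdz0.
have co_a' i : coprime ((a \o lift ord0) i) q by apply: co_a.
under eq_bigr do rewrite signed_sum_countS.
rewrite big_split /= -(big_imset _ (in2W (addIr (- a ord0)%R))) sum_setUI.
apply: leq_trans (leq_add (IHn _ _ co_a') (IHn _ _ co_a')) _.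
exact: middle_binom_sum_setUI_shift_le.
Qed.

Lemma val_Zp_subz (x y : 'I_q) : ((val (x - y)%R)%:Z = (val x)%:Z - (val y)%:Z %[mod q])%Z.
Proof.
apply/eqP; rewrite -(eqz_modDr (val y)%:Z) subrK -PoszD !modz_nat.
by rewrite -[(_ + _) %% q]/(val (x - y + y)%R) subrK modZp.
Qed.

Lemma signed_sum_count_ones n x :
  signed_sum_count (fun _ : 'I_n => inZp 1 : 'I_q) x = binom_mod q n (val x).
Proof.
elim: n x => [|n IHn] x.
  by rewrite signed_sum_count0 binom_mod0 dvdzE /= /dvdn modZp.
rewrite (signed_sum_countS (fun _ => inZp 1 : 'I_q)) !IHn binom_modS; congr (_ + _).
by apply/binom_mod_eqmod/eqP; rewrite val_Zp_subz /= eqz_modDl -modz_nat modzNm.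
Qed.

Definition zmodp_of_int (z : int) : 'I_q := inZp `|(z %% q%:Z)%Z|.

Lemma zmodp_of_intE z : ((val (zmodp_of_int z))%:Z = z %[mod q])%Z.
Proof.
have mod_ge0 : (0 <= (z %% q%:Z)%Z)%R by apply: modz_ge0.
have mod_lt : ((z %% q%:Z)%Z < q%:Z)%R by apply: ltz_pmod.
by rewrite /= modn_small ?gez0_abs ?modz_mod //; lia.
Qed.

Lemma middle_binom_sum_attained n k : (k <= q)%N ->
  exists (a : 'I_n -> 'I_q) (P : {set 'I_q}),
    (forall i, coprime (a i) q) /\ #|P| = k /\ hit_count a P = middle_binom_sum q n k.
Proof.
move=> le_kq; pose r (t : 'I_k) := zmodp_of_int (middle_index n t).
have r_inj : injective r.
  move=> s t rst; have /eqP : (middle_index n s = middle_index n t %[mod q])%Z.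
    by rewrite -[LHS]zmodp_of_intE -[RHS]zmodp_of_intE -/(r s) -/(r t) rst.
  have := middle_indexP n s; have := middle_indexP n t; have := ltn_ord s; have := ltn_ord t.
  move=> lt_tk lt_sk dJt dJs.
  have lt_dist : (`|(middle_index n s - middle_index n t)%R| < q)%N.
    by case: dJs; case: dJt; lia.
  by rewrite eqz_mod_dvd => /dvdz_lt_eq0/(_ lt_dist) J_st; apply: ord_inj; lia.
exists (fun _ => inZp 1), [set r t | t : 'I_k]; split; [|split].
- by move=> i; rewrite /= coprime_modl coprime1n.
- by rewrite card_imset // card_ord.
rewrite hit_countE big_imset; last exact: in2W.
rewrite middle_binom_sumE; apply: eq_bigr => t _.
by rewrite signed_sum_count_ones; apply: binom_mod_eqmod; apply: zmodp_of_intE.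
Qed.

End Counting.

Unset Implicit Arguments.

Theorem theorem1 (q n k : nat) (hq : 0 < q) :
  (forall (a : 'I_n -> 'I_q) (P : {set 'I_q}),
      (forall i, coprime (a i) q) -> #|P| = k ->
      hit_count a P <= middle_binom_sum q n k)
  /\
  (k <= q ->
   exists (a : 'I_n -> 'I_q) (P : {set 'I_q}),
      (forall i, coprime (a i) q) /\ #|P| = k /\
      hit_count a P = middle_binom_sum q n k).
Proof.
case: q hq => // p _; split; last exact: middle_binom_sum_attained.
by move=> a P co_a <-; rewrite hit_countE; apply: sum_signed_sum_count_le.
Qed.
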